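(* For every $\alpha>0$, with the initialization described in the context, $\mathbf{V}(0)+\mathbf{G}(0)=\mathbf{H}(0)$. Consequently, for $\alpha=1$, under gradient flow the predictions satisfy at time $0$ $$\frac{d\mathbf{f}}{dt}=-\boldsymbol{\Lambda}(0)(\mathbf{f}(0)-\mathbf{y})=-\mathbf{H}(0)(\mathbf{f}(0)-\mathbf{y}).$$
   Context: Data $(\mathbf{x}_i,y_i)\in\mathbb{R}^d\times\mathbb{R}$, $i=1,\dots,n$. Network $f(\mathbf{x})=\frac{1}{\sqrt m}\sum_{k=1}^m c_k\sigma(g_k\mathbf{v}_k^\top\mathbf{x}/\|\mathbf{v}_k\|_2)$, $\sigma(s)=\max\{s,0\}$; initialization: independently $\mathbf{v}_k(0)\sim N(0,\alpha^2\mathbf{I})$, $c_k$ uniform on $\{-1,1\}$, $g_k(0)=\|\mathbf{v}_k(0)\|_2/\alpha$. Loss $L=\frac12\sum_i(f(\mathbf{x}_i)-y_i)^2$; gradient flow $\frac{d\mathbf{v}_k}{dt}=-\partial L/\partial\mathbf{v}_k$, $\frac{dg_k}{dt}=-\partial L/\partial g_k$ with $c_k$ fixed; $\mathbf{f}(t)$ the vector of predictions. Notation: $\mathbf{x}^{\mathbf{u}}=\mathbf{u}\mathbf{u}^\top\mathbf{x}/\|\mathbf{u}\|_2^2$, $\mathbf{x}^{\mathbf{u}^\perp}=\mathbf{x}-\mathbf{x}^{\mathbf{u}}$, $\mathbb{1}_{ik}(t)=\mathbb{1}\{\mathbf{v}_k(t)^\top\mathbf{x}_i\ge0\}$. $\mathbf{V}_{ij}(t)=\frac1m\sum_k\big(\frac{\alpha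 c_kg_k(t)}{\|\mathbf{v}_k(t)\|_2}\big)^2\langle\mathbf{x}_i^{\mathbf{v}_k(t)^\perp},\mathbf{x}_j^{\mathbf{v}_k(t)^\perp}\rangle\mathbb{1}_{ik}(t)\mathbb{1}_{jk}(t)$, $\mathbf{G}_{ij}(t)=\frac1m\sum_k\sigma(\mathbf{v}_k(t)^\top\mathbf{x}_i)\sigma(\mathbf{v}_k(t)^\top\mathbf{x}_j)/\|\mathbf{v}_k(t)\|_2^2$, $\boldsymbol{\Lambda}(t)=\mathbf{V}(t)/\alpha^2+\mathbf{G}(t)$, and the (un-normalized) neural tangent kernel $\mathbf{H}_{ij}(0)=\frac1m\sum_k\mathbf{x}_i^\top\mathbf{x}_j\mathbb{1}_{ik}(0)\mathbb{1}_{jk}(0)$. *)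

From HB Require Import structures.
From mathcomp Require Import all_boot all_order all_algebra.
From mathcomp Require Import all_classical all_reals topology normedtype derive.
Set Implicit Arguments. Unset Strict Implicit. Unset Printing Implicit Defensive.
Import Order.TTheory GRing.Theory Num.Theory.
Import numFieldNormedType.Exports.
Local Open Scope ring_scope.

Section Defs.
Variable R : realType.
Variables (m n d : nat).

Definition dot (u w : 'rV[R]_d) : R := \sum_(l < d) u 0 l * w 0 l.
Definition norm2 (u : 'rV[R]_d) : R := Num.sqrt (dot u u).

Definition proj (u x : 'rV[R]_d) : 'rV[R]_d := (dot u x / norm2 u ^+ 2) *: u.
Definition perp (u x : 'rV[R]_d) : 'rV[R]_d := x - proj u x.

Definition relu (s : R) : R := Num.max s 0.

Definition ind (u x : 'rV[R]_d) : R := if 0 <= dot u x then 1 else 0.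

Definition net (c : 'I_m -> R) (v : 'I_m -> 'rV[R]_d) (g : 'I_m -> R)
  (x : 'rV[R]_d) : R :=
  (Num.sqrt (m%:R))^-1 *
    \sum_(k < m) c k * relu (g k * dot (v k) x / norm2 (v k)).

Definition loss (X : 'I_n -> 'rV[R]_d) (y : 'I_n -> R) (c : 'I_m -> R)
  (v : 'I_m -> 'rV[R]_d) (g : 'I_m -> R) : R :=
  2^-1 * \sum_(i < n) (net c v g (X i) - y i) ^+ 2.

Definition vshift (v : 'I_m -> 'rV[R]_d) (k : 'I_m) (l : 'I_d) (s : R)
  : 'I_m -> 'rV[R]_d :=
  fun k' => if k' == k then v k' + \row_(j < d) (if j == l then s else 0)
            else v k'.
Definition gshift (g : 'I_m -> R) (k : 'I_m) (s : R) : 'I_m -> R :=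
  fun k' => if k' == k then g k' + s else g k'.

Definition dLdv X y c v g (k : 'I_m) (l : 'I_d) : R :=
  derive1 (fun s => loss X y c (vshift v k l s) g) 0.
Definition dLdg X y c v g (k : 'I_m) : R :=
  derive1 (fun s => loss X y c v (gshift g k s)) 0.

Definition Vmx (alpha : R) (X : 'I_n -> 'rV[R]_d) (c : 'I_m -> R)
  (v : 'I_m -> 'rV[R]_d) (g : 'I_m -> R) : 'M[R]_n :=
  \matrix_(i < n, j < n) ((m%:R)^-1 *
    \sum_(k < m) (alpha * c k * g k / norm2 (v k)) ^+ 2 *
       dot (perp (v k) (X i)) (perp (v k) (X j)) *
       ind (v k) (X i) * ind (v k) (X j)).

Definition Gmx (X : 'I_n -> 'rV[R]_d) (v : 'I_m -> 'rV[R]_d) : 'M[R]_n :=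
  \matrix_(i < n, j < n) ((m%:R)^-1 *
    \sum_(k < m) relu (dot (v k) (X i)) * relu (dot (v k) (X j))
                 / norm2 (v k) ^+ 2).

Definition Lambda alpha X c v g : 'M[R]_n :=
  (alpha ^+ 2)^-1 *: Vmx alpha X c v g + Gmx X v.

Definition Hmx (X : 'I_n -> 'rV[R]_d) (v : 'I_m -> 'rV[R]_d) : 'M[R]_n :=
  \matrix_(i < n, j < n) ((m%:R)^-1 *
    \sum_(k < m) dot (X i) (X j) * ind (v k) (X i) * ind (v k) (X j)).

End Defs.

From Pilot Require Import Defs.
From HB Require Import structures.
From mathcomp Require Import all_boot all_order all_algebra.
From mathcomp Require Import all_classical all_reals topology normedtype derive realfun.
From mathcomp Require Import ring.
Set Implicit Arguments. Unset Strict Implicit. Unset Printing Implicit Defensive.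
Import Order.TTheory GRing.Theory Num.Theory.
Import numFieldNormedType.Exports.
Local Open Scope ring_scope.

(* Since g_k(0) = ‖v_k(0)‖/α, the factor α c_k g_k/‖v_k‖ in V is c_k = ±1; splitting
   ⟨x_i, x_j⟩ = ⟨x_i^⊥, x_j^⊥⟩ + ⟨v_k, x_i⟩⟨v_k, x_j⟩/‖v_k‖² along v_k and using
   σ(s) = 1{s ≥ 0} s turns each neuron's term of H into its V-part plus its G-part.
   Along gradient flow the chain rule gives df(x_i)/dt = -Σ_j K_ij (f(x_j) - y_j), where
   K is the tangent kernel of the parametrisation (v, g).  The v_k-gradient of
   σ(g_k ⟨v_k, x⟩/‖v_k‖) is (g_k/‖v_k‖) 1{⟨v_k, x⟩ ≥ 0} x^{v_k⊥} and its g_k-derivative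
   is 1{⟨v_k, x⟩ ≥ 0} ⟨v_k, x⟩/‖v_k‖, which makes K = V + G = Λ(0) when α = 1.  The
   generic initialization keeps every ReLU off its kink, so these derivatives exist. *)

Section Derivatives.
Variables (R : realType) (t0 : R).
Implicit Types (f h : R -> R) (a b df dh : R).

Lemma is_deriveM_eq f h df dh e :
  is_derive t0 1 f df -> is_derive t0 1 h dh -> e = f t0 * dh + h t0 * df ->
  is_derive t0 1 (fun t => f t * h t) e.
Proof.
move=> hf hh ->; have := is_deriveM hf hh.
by have -> : (f * h) = (fun t => f t * h t) by apply/funext.
Qed.

Lemma is_deriveD_eq f h df dh e :
  is_derive t0 1 f df -> is_derive t0 1 h dh -> e = df + dh ->
  is_derive t0 1 (fun t => f t + h t) e.
Proof.
move=> hf hh ->; have := is_deriveD hf hh.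
by have -> : (f + h) = (fun t => f t + h t) by apply/funext.
Qed.

Lemma is_derive_sum_eq n (F : 'I_n -> R -> R) (dF : 'I_n -> R) e :
  (forall i, is_derive t0 1 (F i) (dF i)) -> e = \sum_i dF i ->
  is_derive t0 1 (fun t => \sum_i F i t) e.
Proof. by move=> hF ->; have := is_derive_sum hF; rewrite fct_sumE. Qed.

Lemma is_deriveV_eq f df e :
  is_derive t0 1 f df -> f t0 != 0 -> e = - f t0 ^- 2 * df ->
  is_derive t0 1 (fun t => (f t)^-1) e.
Proof. by move=> hf hf0 ->; exact: is_deriveV. Qed.

Lemma is_derive_sqrt_eq f df e :
  is_derive t0 1 f df -> 0 < f t0 -> e = (2 * Num.sqrt (f t0))^-1 * df ->
  is_derive t0 1 (fun t => Num.sqrt (f t)) e.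
Proof. by move=> hf hf0 ->; exact: is_derive1_comp (is_derive1_sqrt hf0) hf. Qed.

Lemma is_derive_affine a b : is_derive t0 1 (fun s => a + s * b) b.
Proof.
apply: is_deriveD_eq (is_derive_cst a _ _) _ (esym (add0r b)).
apply: is_deriveM_eq (is_derive_id t0 1) (is_derive_cst b t0 1) _.
by rewrite mulr0 add0r mulr1.
Qed.

Lemma is_derive_relu f df : is_derive t0 1 f df -> f t0 != 0 ->
  is_derive t0 1 (fun t => relu (f t)) ((if 0 < f t0 then 1 else 0) * df).
Proof.
move=> hf hf0; have cf : {for t0, continuous f}.
  by case: hf => hd _; exact/differentiable_continuous/derivable1_diffP.
have [pos|neg] := ltP 0 (f t0).
  rewrite mul1r; apply: near_eq_is_derive hf.
  near=> t; rewrite /relu max_l // ltW //; near: t; exact: cvgr_gt cf _ pos.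
have neg' : f t0 < 0 by rewrite lt_neqAle hf0 neg.
rewrite mul0r; apply: near_eq_is_derive (is_derive_cst 0 t0 1).
near=> t; rewrite /relu max_r // ltW //; near: t; exact: cvgr_lt cf _ neg'.
Unshelve. all: by end_near.
Qed.

End Derivatives.

Section Euclid.
Variables (R : realType) (d : nat).
Implicit Types (u w x z : 'rV[R]_d) (a : R).

Lemma dotC u w : dot u w = dot w u.
Proof. by apply: eq_bigr => l _; rewrite mulrC. Qed.

Lemma dotZl a u w : dot (a *: u) w = a * dot u w.
Proof. by rewrite /dot mulr_sumr; apply: eq_bigr => l _; rewrite mxE mulrA. Qed.

Lemma dotZr a u w : dot u (a *: w) = a * dot u w.
Proof. by rewrite dotC dotZl dotC. Qed.

Lemma dotNr u w : dot u (- w) = - dot u w.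
Proof. by rewrite -scaleN1r dotZr mulN1r. Qed.

Lemma dotBr u w z : dot u (w - z) = dot u w - dot u z.
Proof. by rewrite /dot -sumrB; apply: eq_bigr => l _; rewrite !mxE mulrBr. Qed.

Lemma dotBl u w z : dot (w - z) u = dot w u - dot z u.
Proof. by rewrite dotC dotBr !(dotC u). Qed.

Lemma dotr0 u : dot u 0 = 0.
Proof. by rewrite /dot big1 // => l _; rewrite mxE mulr0. Qed.

Lemma dot_sumZr n u (a : 'I_n -> R) (w : 'I_n -> 'rV[R]_d) :
  dot u (\sum_j a j *: w j) = \sum_j a j * dot u (w j).
Proof.
rewrite /dot (eq_bigr (fun l => \sum_j u 0 l * (a j * w j 0 l))); last first.
  by move=> l _; rewrite summxE mulr_sumr; apply: eq_bigr => j _; rewrite mxE.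
rewrite exchange_big; apply: eq_bigr => j _; rewrite mulr_sumr.
by apply: eq_bigr => l _; rewrite mulrCA.
Qed.

Lemma dot_delta u (l : 'I_d) : dot u (delta_mx 0 l) = u 0 l.
Proof.
rewrite /dot (bigD1 l) //= big1 => [|l' /negbTE hl']; rewrite mxE ?hl' ?eqxx.
  by rewrite mulr1 addr0.
by rewrite andbF mulr0.
Qed.

Lemma dot_self_ge0 u : 0 <= dot u u.
Proof. by apply: sumr_ge0 => l _; rewrite -expr2 sqr_ge0. Qed.

Lemma dot_self_gt0 {u} : u != 0 -> 0 < dot u u.
Proof.
move=> hu; rewrite lt_def dot_self_ge0 andbT; apply: contra hu => /eqP hu0.
apply/eqP/rowP => l; rewrite mxE.
have hsq k : true -> 0 <= u 0 k * u 0 k by rewrite -expr2 sqr_ge0.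
move: (@psumr_eq0P _ _ _ (fun k => u 0 k * u 0 k) hsq hu0 l isT) => /eqP.
by rewrite mulf_eq0 orbb => /eqP.
Qed.

Lemma norm2_sqr u : norm2 u ^+ 2 = dot u u.
Proof. by rewrite sqr_sqrtr // dot_self_ge0. Qed.

Lemma norm2_gt0 {u} : u != 0 -> 0 < norm2 u.
Proof. by move=> hu; rewrite sqrtr_gt0 dot_self_gt0. Qed.

Lemma perp0 u : perp u 0 = 0.
Proof. by rewrite /perp /Defs.proj dotr0 mul0r scale0r subrr. Qed.

Lemma dot_perp u x z : u != 0 ->
  dot (perp u x) (perp u z) = dot x z - dot u x * dot u z / dot u u.
Proof.
move=> hu; rewrite /perp /Defs.proj norm2_sqr dotBl !dotBr !dotZl !dotZr.
rewrite ?(dotC x u) ?(dotC z u); field; by rewrite gt_eqF // dot_self_gt0.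
Qed.

Lemma relu_dot u x : relu (dot u x) = ind u x * dot u x.
Proof. by rewrite /relu /ind; case: leP => h; rewrite ?mul1r ?mul0r // max_r ?ltW. Qed.

Variable t0 : R.
Variables (p : R -> 'rV[R]_d) (P : 'rV[R]_d).
Hypothesis p_derive : forall l, is_derive t0 1 (fun t => p t 0 l) (P 0 l).

Lemma is_derive_dot x : is_derive t0 1 (fun t => dot (p t) x) (dot P x).
Proof.
apply: is_derive_sum_eq; rewrite /dot; apply: eq_bigr => l _.
rewrite scaler0 add0r; exact: mulrC.
Qed.

Lemma is_derive_norm2 : p t0 != 0 ->
  is_derive t0 1 (fun t => norm2 (p t)) (dot (p t0) P / norm2 (p t0)).
Proof.
move=> hp; have hN := norm2_gt0 hp.
have hD : is_derive t0 1 (fun t => dot (p t) (p t)) (2 * dot (p t0) P).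
  apply: is_derive_sum_eq; rewrite /dot mulr_sumr; apply: eq_bigr => l _.
  by rewrite -mulr2n mulr_natl.
apply: is_derive_sqrt_eq hD (dot_self_gt0 hp) _.
by rewrite -/(norm2 (p t0)); field; rewrite gt_eqF.
Qed.

End Euclid.

Section Network.
Variables (R : realType) (d m : nat) (c : 'I_m -> R).
Implicit Types (v : 'I_m -> 'rV[R]_d) (g : 'I_m -> R) (x : 'rV[R]_d).

(* Every neuron outputs 0 at x = 0 whatever the parameters, so no kink condition is
   needed there. *)
Definition generic_input v x := x = 0 \/ forall k, dot (v k) x != 0.

Definition dnet_dv v g k x : 'rV[R]_d :=
  ((Num.sqrt m%:R)^-1 * c k * ind (v k) x * (g k / norm2 (v k))) *: perp (v k) x.

Definition dnet_dg v k x : R :=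
  (Num.sqrt m%:R)^-1 * c k * ind (v k) x * (dot (v k) x / norm2 (v k)).

Definition ntk n (X : 'I_n -> 'rV[R]_d) v g : 'M[R]_n :=
  \matrix_(i, j) \sum_k (dot (dnet_dv v g k (X i)) (dnet_dv v g k (X j))
                         + dnet_dg v k (X i) * dnet_dg v k (X j)).

Section PathDerivatives.
Variable t0 : R.

Lemma is_derive_neuron (p : R -> 'rV[R]_d) (q : R -> R) (P : 'rV[R]_d) (Q : R) x :
  (forall l, is_derive t0 1 (fun t => p t 0 l) (P 0 l)) -> is_derive t0 1 q Q ->
  p t0 != 0 -> 0 < q t0 -> dot (p t0) x != 0 ->
  is_derive t0 1 (fun t => relu (q t * dot (p t) x / norm2 (p t)))
    (ind (p t0) x * (Q * dot (p t0) x / norm2 (p t0)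
                     + q t0 / norm2 (p t0) * dot P (perp (p t0) x))).
Proof.
move=> hP hq hp hq0 hx; have hN := norm2_gt0 hp.
have hpre : is_derive t0 1 (fun t => q t * dot (p t) x / norm2 (p t))
    (Q * dot (p t0) x / norm2 (p t0) + q t0 / norm2 (p t0) * dot P (perp (p t0) x)).
  apply: is_deriveM_eq (is_deriveM_eq hq (is_derive_dot hP x) erefl)
    (is_deriveV_eq (is_derive_norm2 hP hp) (lt0r_neq0 hN) erefl) _.
  rewrite /perp /Defs.proj dotBr dotZr (dotC P (p t0)).
  by field; rewrite gt_eqF.
have hsign : (0 < q t0 * dot (p t0) x / norm2 (p t0)) = (0 <= dot (p t0) x).
  by rewrite mulrAC pmulr_rgt0 ?divr_gt0 // lt_def hx.
have hne : q t0 * dot (p t0) x / norm2 (p t0) != 0.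
  by apply: mulf_neq0; [exact: mulf_neq0 (lt0r_neq0 hq0) hx | rewrite invr_eq0 lt0r_neq0].
by apply: is_derive_eq (is_derive_relu hpre hne) _; rewrite hsign.
Qed.

Lemma is_derive_net (p : R -> 'I_m -> 'rV[R]_d) (q : R -> 'I_m -> R)
    (P : 'I_m -> 'rV[R]_d) (Q : 'I_m -> R) x :
  (forall k l, is_derive t0 1 (fun t => p t k 0 l) (P k 0 l)) ->
  (forall k, is_derive t0 1 (fun t => q t k) (Q k)) ->
  (forall k, p t0 k != 0) -> (forall k, 0 < q t0 k) -> generic_input (p t0) x ->
  is_derive t0 1 (fun t => net c (p t) (q t) x)
    (\sum_k (dot (dnet_dv (p t0) (q t0) k x) (P k) + dnet_dg (p t0) k x * Q k)).
Proof.
move=> hP hQ hp hq [->|hx].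
  have -> : (fun t => net c (p t) (q t) 0) = fun=> 0.
    apply/funext => t; rewrite /net big1 ?mulr0 // => k _.
    by rewrite dotr0 mulr0 mul0r /relu maxxx mulr0.
  apply: is_derive_eq (is_derive_cst 0 t0 1) _; rewrite big1 // => k _.
  by rewrite /dnet_dv /dnet_dg perp0 scaler0 dotC dotr0 dotr0 mul0r mulr0 mul0r addr0.
rewrite /net; apply: is_deriveM_eq (is_derive_cst (Num.sqrt m%:R)^-1 _ _)
  (is_derive_sum_eq (fun k => is_deriveM_eq (is_derive_cst (c k) _ _)
     (is_derive_neuron (hP k) (hQ k) (hp k) (hq k) (hx k)) erefl) erefl) _.
rewrite mulr0 addr0 mulr_sumr; apply: eq_bigr => k _.
rewrite /dnet_dv /dnet_dg dotZl (dotC (perp _ _)) /cst; ring.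
Qed.

Lemma is_derive_loss n (X : 'I_n -> 'rV[R]_d) (y : 'I_n -> R)
    (p : R -> 'I_m -> 'rV[R]_d) (q : R -> 'I_m -> R)
    (P : 'I_m -> 'rV[R]_d) (Q : 'I_m -> R) :
  (forall k l, is_derive t0 1 (fun t => p t k 0 l) (P k 0 l)) ->
  (forall k, is_derive t0 1 (fun t => q t k) (Q k)) ->
  (forall k, p t0 k != 0) -> (forall k, 0 < q t0 k) ->
  (forall j, generic_input (p t0) (X j)) ->
  is_derive t0 1 (fun t => loss X y c (p t) (q t))
    (\sum_j (net c (p t0) (q t0) (X j) - y j) *
       \sum_k (dot (dnet_dv (p t0) (q t0) k (X j)) (P k) + dnet_dg (p t0) k (X j) * Q k)).
Proof.
move=> hP hQ hp hq hX.
pose D j := \sum_k (dot (dnet_dv (p t0) (q t0) k (X j)) (P k)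
                    + dnet_dg (p t0) k (X j) * Q k).
pose r j := net c (p t0) (q t0) (X j) - y j.
have hsq j : is_derive t0 1 (fun t => (net c (p t) (q t) (X j) - y j) ^+ 2) (2 * r j * D j).
  have hres : is_derive t0 1 (fun t => net c (p t) (q t) (X j) - y j) (D j).
    exact: is_deriveD_eq (is_derive_net hP hQ hp hq (hX j))
      (is_derive_cst (- y j) t0 1) (esym (addr0 _)).
  have -> : (fun t => (net c (p t) (q t) (X j) - y j) ^+ 2)
          = (fun t => (net c (p t) (q t) (X j) - y j) * (net c (p t) (q t) (X j) - y j)).
    by apply/funext => t; rewrite expr2.
  by apply: (is_deriveM_eq hres hres); rewrite /r; ring.
rewrite /loss; apply: (is_deriveM_eq (is_derive_cst _ t0 1) (is_derive_sum_eq hsq erefl)).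
rewrite mulr0 addr0 mulr_sumr; apply: eq_bigr => j _.
by rewrite [cst _ t0](_ : _ = 2^-1) // /r /D; field.
Qed.

End PathDerivatives.

Lemma vshiftE v k l s k' :
  vshift v k l s k' = v k' + s *: ((k' == k)%:R *: delta_mx 0 l).
Proof.
rewrite /vshift; case: eqP => [->|_]; last by rewrite scale0r scaler0 addr0.
congr (_ + _); apply/rowP => j; rewrite !mxE eqxx /=.
by case: (j == l); rewrite ?mulr1 ?mulr0.
Qed.

Lemma vshift0 v k l : vshift v k l 0 = v.
Proof. by apply/funext => k'; rewrite vshiftE scale0r addr0. Qed.

Lemma gshiftE g k s k' : gshift g k s k' = g k' + s * (k' == k)%:R.
Proof. by rewrite /gshift; case: eqP; rewrite ?mulr1 ?mulr0 ?addr0. Qed.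

Lemma gshift0 g k : gshift g k 0 = g.
Proof. by apply/funext => k'; rewrite gshiftE mul0r addr0. Qed.

Lemma dLdvE n (X : 'I_n -> 'rV[R]_d) (y : 'I_n -> R) v g k l :
  (forall k, v k != 0) -> (forall k, 0 < g k) -> (forall j, generic_input v (X j)) ->
  dLdv X y c v g k l = \sum_j (net c v g (X j) - y j) * dnet_dv v g k (X j) 0 l.
Proof.
move=> hv hg hX; rewrite /dLdv derive1E; apply: derive_val.
pose P k' : 'rV[R]_d := (k' == k)%:R *: delta_mx 0 l.
have hP k' l' : is_derive (0 : R) 1 (fun s => vshift v k l s k' 0 l') (P k' 0 l').
  have -> : (fun s => vshift v k l s k' 0 l') = (fun s => v k' 0 l' + s * P k' 0 l').
    by apply/funext => s; rewrite vshiftE !mxE.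
  exact: is_derive_affine.
have := is_derive_loss (X := X) y hP (fun k' => is_derive_cst (g k') (0 : R) 1).
rewrite vshift0 => /(_ hv hg hX) hloss; apply: is_derive_eq hloss _.
apply: eq_bigr => j _; congr (_ * _).
rewrite (bigD1 k) //= big1 => [|k' /negbTE hk']; rewrite /P ?eqxx ?hk'.
  by rewrite scale1r dot_delta mulr0 !addr0.
by rewrite scale0r dotr0 mulr0 addr0.
Qed.

Lemma dLdgE n (X : 'I_n -> 'rV[R]_d) (y : 'I_n -> R) v g k :
  (forall k, v k != 0) -> (forall k, 0 < g k) -> (forall j, generic_input v (X j)) ->
  dLdg X y c v g k = \sum_j (net c v g (X j) - y j) * dnet_dg v k (X j).
Proof.
move=> hv hg hX; rewrite /dLdg derive1E; apply: derive_val.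
have hP k' l' : is_derive (0 : R) 1 (fun=> v k' 0 l') ((0 : 'rV[R]_d) 0 l').
  by rewrite mxE; exact: is_derive_cst.
have hQ k' : is_derive (0 : R) 1 (fun s => gshift g k s k') (k' == k)%:R.
  have -> : (fun s => gshift g k s k') = (fun s => g k' + s * (k' == k)%:R).
    by apply/funext => s; rewrite gshiftE.
  exact: is_derive_affine.
have := is_derive_loss (X := X) y hP hQ; rewrite gshift0 => /(_ hv hg hX) hloss.
apply: is_derive_eq hloss _; apply: eq_bigr => j _; congr (_ * _).
rewrite (bigD1 k) //= big1 => [|k' /negbTE hk']; rewrite ?eqxx ?hk' dotr0.
  by rewrite mulr1 add0r addr0.
by rewrite mulr0 addr0.
Qed.

Lemma is_derive_net_gradient_flow t0 n (X : 'I_n -> 'rV[R]_d) (y : 'I_n -> R)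
    (v : R -> 'I_m -> 'rV[R]_d) (g : R -> 'I_m -> R) i :
  (forall k, v t0 k != 0) -> (forall k, 0 < g t0 k) ->
  (forall j, generic_input (v t0) (X j)) ->
  (forall k l, is_derive t0 1 (fun t => v t k 0 l) (- dLdv X y c (v t0) (g t0) k l)) ->
  (forall k, is_derive t0 1 (fun t => g t k) (- dLdg X y c (v t0) (g t0) k)) ->
  is_derive t0 1 (fun t => net c (v t) (g t) (X i))
    (- \sum_j ntk X (v t0) (g t0) i j * (net c (v t0) (g t0) (X j) - y j)).
Proof.
move=> hv hg hX hdv hdg.
pose r j := net c (v t0) (g t0) (X j) - y j.
have hP k l : is_derive t0 1 (fun t => v t k 0 l)
    ((- \sum_j r j *: dnet_dv (v t0) (g t0) k (X j)) 0 l).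
  apply: is_derive_eq (hdv k l) _; rewrite (dLdvE y k l hv hg hX) !mxE summxE.
  by congr (- _); apply: eq_bigr => j _; rewrite [RHS]mxE.
have hQ k : is_derive t0 1 (fun t => g t k) (- \sum_j r j * dnet_dg (v t0) k (X j)).
  by rewrite -(dLdgE y k hv hg hX).
apply: is_derive_eq (is_derive_net hP hQ hv hg (hX i)) _.
under eq_bigr => k _ do rewrite dotNr dot_sumZr mulrN mulr_sumr -opprD -big_split.
rewrite sumrN exchange_big; congr (- _); apply: eq_bigr => j _ /=.
by rewrite mxE mulr_suml; apply: eq_bigr => k _; rewrite /r; ring.
Qed.

Lemma Lambda1E n (X : 'I_n -> 'rV[R]_d) v g :
  Lambda 1 X c v g = Vmx 1 X c v g + Gmx X v.
Proof. by rewrite /Lambda expr1n invr1 scale1r. Qed.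

Hypothesis c_sign : forall k, c k = 1 \/ c k = -1.

Lemma ntk_Lambda1 n (X : 'I_n -> 'rV[R]_d) v g : ntk X v g = Lambda 1 X c v g.
Proof.
apply/matrixP => i j; rewrite Lambda1E !mxE mulr_sumr [G in _ + G]mulr_sumr -big_split.
apply: eq_bigr => k _ /=; rewrite /dnet_dv /dnet_dg dotZl dotZr !relu_dot.
have hm : (Num.sqrt m%:R)^-1 ^+ 2 = m%:R^-1 :> R by rewrite exprVn sqr_sqrtr ?ler0n.
by rewrite -hm -exprVn; case: (c_sign k) => ->; ring.
Qed.

Lemma Vmx_add_Gmx n (X : 'I_n -> 'rV[R]_d) alpha v g :
  0 < alpha -> (forall k, v k != 0) -> (forall k, g k = norm2 (v k) / alpha) ->
  Vmx alpha X c v g + Gmx X v = Hmx X v.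
Proof.
move=> ha hv hg; apply/matrixP => i j; rewrite !mxE -mulrDr -big_split; congr (_ * _).
apply: eq_bigr => k _ /=; have hN := norm2_gt0 (hv k).
have -> : alpha * c k * g k / norm2 (v k) = c k.
  by rewrite hg; field; rewrite !gt_eqF.
by rewrite dot_perp // !relu_dot norm2_sqr; case: (c_sign k) => ->; ring.
Qed.

End Network.

Theorem proposition3p1 (R : realType) (m n d : nat)
  (X : 'I_n -> 'rV[R]_d) (y : 'I_n -> R) (c : 'I_m -> R)
  (hc : forall k, c k = 1 \/ c k = -1) :
  (* part 1: for every alpha > 0 and every initialization v_k(0) <> 0,
     g_k(0) = ||v_k(0)|| / alpha, we have V(0) + G(0) = H(0) *)
  (forall (alpha : R) (v0 : 'I_m -> 'rV[R]_d) (g0 : 'I_m -> R),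
     0 < alpha ->
     (forall k, v0 k != 0) ->
     (forall k, g0 k = norm2 (v0 k) / alpha) ->
     Vmx alpha X c v0 g0 + Gmx X v0 = Hmx X v0)
  /\
  (* part 2: alpha = 1, gradient flow; derivative of predictions at t = 0 *)
  (forall (v : R -> 'I_m -> 'rV[R]_d) (g : R -> 'I_m -> R),
     (forall k, v 0 k != 0) ->
     (forall k, g 0 k = norm2 (v 0 k)) ->
     (* generic initialization (holds almost surely): no kink of ReLU at t=0 *)
     (forall i k, X i != 0 -> dot (v 0 k) (X i) != 0) ->
     (* gradient flow equations at time 0 *)
     (forall k l, is_derive (0 : R) (1 : R) (fun t => v t k 0 l)
                    (- dLdv X y c (v 0) (g 0) k l)) ->
     (forall k, is_derive (0 : R) (1 : R) (fun t => g t k)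
                    (- dLdg X y c (v 0) (g 0) k)) ->
     forall i : 'I_n,
       is_derive (0 : R) (1 : R) (fun t => net c (v t) (g t) (X i))
         (- \sum_(j < n) Lambda 1 X c (v 0) (g 0) i j
                           * (net c (v 0) (g 0) (X j) - y j))
       /\ Lambda 1 X c (v 0) (g 0) = Hmx X (v 0)).
Proof.
split=> [alpha v0 g0|v g hv hg hX hdv hdg i]; first exact: Vmx_add_Gmx.
have hg0 k : 0 < g 0 k by rewrite hg norm2_gt0.
have hgen j : generic_input (v 0) (X j).
  by have [->|hXj] := eqVneq (X j) 0; [left | right=> k; exact: hX].
split; last by rewrite Lambda1E; apply: Vmx_add_Gmx => // k; rewrite hg divr1.
by rewrite -(ntk_Lambda1 hc); exact: is_derive_net_gradient_flow hv hg0 hgen hdv hdg.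
Qed.
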